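(* Consider the following two-bidder sealed-bid first-price common-value auction with limit price $L\ge 0$. A single good has common value $v$, a random variable with CDF $F_v$, density $f_v$, support $\mathbb{R}_+$ and finite mean. Alice submits a (possibly randomized) bid $b_A\ge 0$ knowing only $F_v$. Then $v$ is realized; Bob observes $v$ (but not $b_A$) and submits a bid $\beta(v)\ge 0$. The highest bid wins and the winner pays their bid and receives payoff $v$ minus the bid (the loser gets $0$), except that if the highest bid is strictly below $L$ the good is unsold. Ties: if Alice's and Bob's bids are equal, Bob wins; if Bob's bid equals $L$ he can win; if the winning bid is Alice's and equals exactly $L$, the good is unsold. Assume $\mathbb{E}[v]>L$ and that there exists $\underline v$ in the support of $F_v$ with $$L=\mathbb{E}[\tilde v\mid \tilde v<\underline v],$$ where $\tilde v\sim F_v$. Define $$\beta_L(v)=\begin{cases}\mathbb{E}[\tilde v\mid \tilde v<v] & \text{if } v\ge \underline v,\\ L & \text{if } L<v<\underline v,\\ 0 & \text{if } v\le L.\end{cases}$$ Then the equilibrium (perfect Bayesian Nash equilibrium) bidding strategies are: Bob, upon observing $v$, bids $\beta_L(v)$; Alice uses the mixed strategy in which she draws a value $v'\sim F_v$ (independently of $v$) and bids $\beta_L(v')$.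
   Context: Bidders are risk neutral. $\tilde v$ denotes a generic random variable with CDF $F_v$; conditional expectations are with respect to $F_v$. *)

From HB Require Import structures.
From mathcomp Require Import all_boot all_order all_algebra.
From mathcomp Require Import all_classical all_reals all_analysis.
Set Implicit Arguments. Unset Strict Implicit. Unset Printing Implicit Defensive.
Import Order.TTheory GRing.Theory Num.Theory.
Local Open Scope classical_set_scope.
Local Open Scope ring_scope.

Section Auction.
Variable R : realType.
Notation mu := (@lebesgue_measure R).

Definition density_on_Rplus (f : R -> R) : Prop :=
  measurable_fun setT f /\
      (forall x, 0 <= f x) /\
      (forall x, x < 0 -> f x = 0) /\
      ((\int[mu]_x (f x)%:E)%E = 1%E) /\
  mu.-integrable setT (fun x => (x * f x)%:E) /\
      (forall x e : R, 0 <= x -> 0 < e ->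
          (0 < \int[mu]_(y in `](x - e)%R, (x + e)%R[%classic) (f y)%:E)%E).

(* CDF: F_v(x) = P(v <= x); P(v < x) is the same (no atoms) *)
Definition cdf (f : R -> R) (x : R) : R := Rintegral mu `]-oo, x] f.
Definition prob_lt (f : R -> R) (x : R) : R := Rintegral mu `]-oo, x[ f.

Definition mean (f : R -> R) : R := Rintegral mu setT (fun y => y * f y).

Definition cond_mean_below (f : R -> R) (x : R) : R :=
  Rintegral mu `]-oo, x[ (fun y => y * f y) / prob_lt f x.

Definition betaL (f : R -> R) (L vl : R) (v : R) : R :=
  if vl <= v then cond_mean_below f v
  else if L < v then L else 0.

Definition payoffA (L a b v : R) : R :=
  if (b < a) && (L < a) then v - a else 0.
Definition payoffB (L a b v : R) : R :=
  if (a <= b) && (L <= b) then v - b else 0.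

Definition exp_payoffA (f : R -> R) (L : R) (beta : R -> R) (a : R) : \bar R :=
  (\int[mu]_v (payoffA L a (beta v) v * f v)%:E)%E.

Definition exp_payoffA_mixed (f : R -> R) (L : R) (beta' beta : R -> R) : \bar R :=
  (\int[mu]_v' ((f v')%:E * exp_payoffA f L beta (beta' v')))%E.

Definition exp_payoffB (f : R -> R) (L : R) (beta' : R -> R) (v b : R) : \bar R :=
  (\int[mu]_v' (payoffB L (beta' v') b v * f v')%:E)%E.

End Auction.

(* Write P(x) = Pr[v < x] and m(x) = E[v | v < x].  For a fixed c, the partial
   integral excess c x = \int_{s < x} (s - c) f(s) ds equals P(x) (m(x) - c); hence m
   is nondecreasing, and strictly increasing on R_+ since f has full support there,
   so betaL is nondecreasing and coincides with m on [vl, +oo).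
   If S is down-closed, contains vl, and betaL <= c on S, then
   \int_S (s - c) f(s) ds <= 0: S is (-oo, x], (-oo, x) or R, so this integral is a
   limit of values excess c t with t in S, t >= vl, each equal to P(t) (m(t) - c) <= 0.
   A bid a > L of Alice wins on the down-closed set {betaL < a}, so it earns
   \int (v - a) f(v) dv <= 0 over that set; the bid betaL(v') > L wins exactly on
   (-oo, v') and earns excess (m v') v' = 0.  A bid b >= L of Bob wins on
   T = {betaL <= b}; splitting v - b = (t - b) - (t - v), his payoff is at most
   -\int_T (t - v) f(t) dt <= -excess v w with w = max(v, vl), and his own bid
   betaL(v) = m(w) attains this bound. *)

From HB Require Import structures.
From mathcomp Require Import all_boot all_order all_algebra.
From mathcomp Require Import all_classical all_reals all_analysis.
From mathcomp Require Import measurable_realfun ring lra.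
Import Order.TTheory GRing.Theory Num.Theory numFieldNormedType.Exports.
Set Implicit Arguments. Unset Strict Implicit. Unset Printing Implicit Defensive.
Local Open Scope classical_set_scope.
Local Open Scope ring_scope.

Section real_integral.
Context {R : realType}.
Notation mu := (@lebesgue_measure R).
Implicit Types (h : R -> R) (A B S : set R).

Lemma Rintegral_le0 A h : (forall x, A x -> h x <= 0) ->
  \int[mu]_(x in A) h x <= 0.
Proof.
move=> h0; rewrite /Rintegral fine_le0//.
under eq_integral do rewrite -[h _]opprK EFinN.
rewrite integral_ge0N ?oppe_le0 ?integral_ge0// => x Ax;
  by rewrite lee_fin oppr_ge0 h0.
Qed.

Lemma integrable_restrictT A h : measurable A ->
  mu.-integrable setT (EFin \o h) -> mu.-integrable setT (EFin \o h \_ A).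
Proof.
move=> mA ih; rewrite -restrict_EFin; apply/integrable_restrict => //.
by rewrite setTI; exact: integrableS ih.
Qed.

Lemma le_Rintegral_set A B h : measurable A -> measurable B ->
  mu.-integrable setT (EFin \o h) ->
  (forall x, A x -> ~ B x -> h x <= 0) -> (forall x, B x -> ~ A x -> 0 <= h x) ->
  \int[mu]_(x in A) h x <= \int[mu]_(x in B) h x.
Proof.
move=> mA mB ih hAB hBA.
rewrite [X in X <= _]Rintegral_mkcond [X in _ <= X]Rintegral_mkcond.
apply: le_Rintegral => //; [exact: integrable_restrictT|exact: integrable_restrictT|].
move=> x _; rewrite !patchE.
have [Ax|Ax] := pselect (A x); have [Bx|Bx] := pselect (B x).
- by rewrite !mem_set.
- by rewrite mem_set// memNset//; exact: hAB.
- by rewrite memNset// mem_set//; exact: hBA.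
- by rewrite !memNset.
Qed.

Lemma Rintegral_itvNy_split h x y : mu.-integrable setT (EFin \o h) -> x <= y ->
  \int[mu]_(s in `]-oo, y[) h s =
  \int[mu]_(s in `]-oo, x[) h s + \int[mu]_(s in `[x, y[) h s.
Proof.
move=> ih xy; rewrite (@itv_bndbnd_setU _ _ _ (BLeft x)) ?bnd_simp//.
rewrite Rintegral_setU//.
  by rewrite -itv_bndbnd_setU ?bnd_simp//; exact: integrableS ih.
apply/disj_set2P/seteqP; split => z //=.
by rewrite !in_itv/= => -[zx /andP[/(lt_le_trans zx)]]; rewrite ltxx.
Qed.

Lemma cvg_Rintegral_exhaust A h (t : nat -> R) : measurable A ->
  mu.-integrable setT (EFin \o h) ->
  (forall s, A s -> \forall n \near \oo, s < t n) -> (forall n s, s < t n -> A s) ->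
  (\int[mu]_(s in `]-oo, t n[) (h s)%:E)%E @[n --> \oo] -->
  (\int[mu]_(s in A) (h s)%:E)%E.
Proof.
move=> mA ih At tA.
pose h_ n := EFin \o h \_ `]-oo, t n[.
have h_h : {ae mu, forall s, setT s -> h_ ^~ s @ \oo --> (EFin \o h \_ A) s}.
  apply: aeW => s _; apply: cvg_near_cst; rewrite /h_ /=.
  have [As|nAs] := pselect (A s).
    near=> n; rewrite !patchE (mem_set As) mem_set//= in_itv/=.
    by near: n; exact: At.
  apply: nearW => n; rewrite !patchE (memNset nAs).
  by case: ifPn => // /set_mem /=; rewrite in_itv/= => /tA.
have h_le : {ae mu, forall s n, setT s -> (`|h_ n s| <= (abse \o (EFin \o h)) s)%E}.
  by apply: aeW => s n _; rewrite /h_ /= patchE; case: ifPn; rewrite ?normr0 ?abse0 ?lee_fin.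
have [_ _ h_cvg] := @dominated_convergence _ _ _ mu setT measurableT h_
  (EFin \o h \_ A) (abse \o (EFin \o h))
  (fun n => measurable_int _ (integrable_restrictT (measurable_itv _) ih))
  (measurable_int _ (integrable_restrictT mA ih))
  h_h (integrable_abse ih) h_le.
rewrite integral_mkcond restrict_EFin.
under eq_fun do rewrite integral_mkcond restrict_EFin.
exact: h_cvg.
Unshelve. all: by end_near.
Qed.

Lemma EFin_Rintegral A h : measurable A -> mu.-integrable setT (EFin \o h) ->
  (\int[mu]_(x in A) h x)%:E = (\int[mu]_(x in A) (h x)%:E)%E.
Proof.
move=> mA ih; rewrite fineK//.
by apply: integrable_fin_num => //; exact: integrableS ih.
Qed.

Lemma integral_ifE (p : pred R) h : measurable [set x | p x] ->
  mu.-integrable setT (EFin \o h) ->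
  (\int[mu]_x ((if p x then h x else 0)%:E))%E = (\int[mu]_(x in [set x | p x]) h x)%:E.
Proof.
move=> mp ih; rewrite EFin_Rintegral// [in RHS]integral_mkcond.
apply: eq_integral => x _; rewrite /= patchE.
have -> : (x \in [set x | p x]) = p x by apply/idP/idP => [/set_mem|/mem_set].
by case: (p x).
Qed.

Definition down_closed S := forall s t, s <= t -> S t -> S s.

Lemma down_closed_measurable S : down_closed S -> measurable S.
Proof.
move=> dS; apply: is_interval_measurable => x y _ Sy z /andP[_ zy].
exact: dS zy Sy.
Qed.

Lemma down_closed_cases S v0 : down_closed S -> S v0 ->
  [\/ S = setT, exists2 x, v0 <= x & S = `]-oo, x]%classic |
      exists2 x, v0 < x & S = `]-oo, x[%classic].
Proof.
move=> dS Sv0.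
have [[M SM]|unbounded] := pselect (exists M, ubound S M); last first.
  apply: Or31; apply/seteqP; split => // s _.
  apply: contrapT => nSs; apply: unbounded; exists s => t St.
  by rewrite leNgt; apply/negP => /ltW st; exact: nSs (dS _ _ st St).
have supS : has_sup S by split; [exists v0|exists M].
have le_sup := sup_upper_bound supS.
have lt_supS s : s < sup S -> S s.
  rewrite -subr_gt0 => /sup_adherent/(_ supS)[t St].
  by rewrite subKr => /ltW st; exact: dS st St.
have [Ssup|nSsup] := pselect (S (sup S)).
  apply: Or32; exists (sup S); first exact: le_sup.
  apply/seteqP; split => s /=; rewrite in_itv/=; first exact: le_sup.
  by rewrite le_eqVlt => /predU1P[->|/lt_supS].
have lt_sup s : S s -> s < sup S.
  by move=> Ss; rewrite lt_neqAle le_sup// andbT; apply: contraPneq nSsup => <-.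
apply: Or33; exists (sup S); first exact: lt_sup.
by apply/seteqP; split => s /=; rewrite in_itv/=; [exact: lt_sup|exact: lt_supS].
Qed.

Lemma Rintegral_down_closed_le0 S v0 h : mu.-integrable setT (EFin \o h) ->
  down_closed S -> S v0 ->
  (forall t, S t -> v0 <= t -> \int[mu]_(s in `]-oo, t[) h s <= 0) ->
  \int[mu]_(s in S) h s <= 0.
Proof.
move=> ih dS Sv0 hS.
have mS := down_closed_measurable dS.
have exhaust (t : nat -> R) : (forall s, S s -> \forall n \near \oo, s < t n) ->
    (forall n, S (t n)) -> (\forall n \near \oo, v0 <= t n) ->
    \int[mu]_(s in S) h s <= 0.
  move=> St tS v0t; rewrite -lee_fin EFin_Rintegral//.
  have tS' n s : s < t n -> S s by move/ltW/dS; apply; exact: tS.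
  apply: cvge_to_le (cvg_Rintegral_exhaust mS ih St tS') _.
  by apply: filterS v0t => n /(hS _ (tS n)); rewrite -lee_fin EFin_Rintegral.
case: (down_closed_cases dS Sv0) => [ST|[x v0x Sx]|[x v0x Sx]].
- apply: (exhaust (fun n => n%:R)); rewrite ?ST//.
    by move=> s _; exact: nbhs_infty_gtr.
  exact: nbhs_infty_ger.
- rewrite Sx -Rintegral_itv_bndo_bndc; last exact: integrableS ih.
  by apply: hS v0x; rewrite Sx /= in_itv/=.
- have xSinv n : x - n.+1%:R^-1 < x by rewrite ltrBlDl ltrDr invr_gt0 ltr0Sn.
  have near_x e : 0 < e -> \forall n \near \oo, x - e < x - n.+1%:R^-1.
    move=> e0; near=> n; rewrite ltrD2l ltrN2.
    by near: n; exact: (near_infty_natSinv_lt (PosNum e0)).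
  apply: (exhaust (fun n => x - n.+1%:R^-1)); rewrite ?Sx.
  + move=> s; rewrite /= in_itv/= -subr_gt0 => /near_x; apply: filterS => n.
    by rewrite subKr.
  + by move=> n; rewrite /= in_itv/=.
  + have := near_x (x - v0); rewrite subr_gt0 subKr => /(_ v0x).
    by apply: filterS => n /ltW.
Unshelve. all: by end_near.
Qed.
End real_integral.

Section density.
Context {R : realType}.
Notation mu := (@lebesgue_measure R).
Variable f : R -> R.
Hypothesis mf : measurable_fun setT f.
Hypothesis f_ge0 : forall x, 0 <= f x.
Hypothesis f_int1 : (\int[mu]_x (f x)%:E = 1)%E.
Hypothesis xf_int : mu.-integrable setT (fun x => (x * f x)%:E).
Hypothesis f_supp : forall x e : R, 0 <= x -> 0 < e ->
  (0 < \int[mu]_(y in `](x - e)%R, (x + e)%R[%classic) (f y)%:E)%E.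

Lemma integrable_density : mu.-integrable setT (EFin \o f).
Proof.
apply/integrableP; split; first exact/measurable_EFinP.
by under eq_integral do rewrite /= ger0_norm//; rewrite f_int1 ltry.
Qed.

Lemma integrable_scaled_density c : mu.-integrable setT (EFin \o (fun s => c * f s)).
Proof.
exact: eq_integrable (integrableZl measurableT c integrable_density).
Qed.

Definition dev c s := (s - c) * f s.

Lemma integrable_dev c : mu.-integrable setT (EFin \o dev c).
Proof.
apply: eq_integrable (integrableB measurableT xf_int (integrable_scaled_density c)) => // s _.
by rewrite /= /dev mulrBl.
Qed.

Definition excess c x := \int[mu]_(s in `]-oo, x[) dev c s.

Lemma le_prob_lt : {homo prob_lt f : x y / x <= y}.
Proof.
move=> x y xy; rewrite /prob_lt (Rintegral_itvNy_split integrable_density xy).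
by rewrite lerDl Rintegral_ge0.
Qed.

Lemma prob_itv_gt0 a b : 0 <= a -> a < b -> 0 < \int[mu]_(s in `[a, b[) f s.
Proof.
move=> a0 ab; rewrite -Rintegral_itv_obnd_cbnd; last exact: integrableS integrable_density.
have := f_supp (x := (a + b) / 2) (e := (b - a) / 2).
have -> : (a + b) / 2 - (b - a) / 2 = a by field.
have -> : (a + b) / 2 + (b - a) / 2 = b by field.
by rewrite -EFin_Rintegral ?lte_fin//; [apply; lra|exact: integrable_density].
Qed.

Lemma excess_cond_mean c x : 0 < prob_lt f x ->
  excess c x = prob_lt f x * (cond_mean_below f x - c).
Proof.
move=> Px; rewrite /excess /cond_mean_below.
under eq_Rintegral do rewrite /dev mulrBl.
rewrite RintegralB//; [|exact: integrableS xf_int|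
                       exact: integrableS (integrable_scaled_density c)].
rewrite RintegralZl//; last exact: integrableS integrable_density.
by rewrite -/(prob_lt f x); field; rewrite gt_eqF.
Qed.

Lemma le_excess c x y : c <= x -> x <= y -> excess c x <= excess c y.
Proof.
move=> cx xy; apply: le_Rintegral_set => //; first exact: integrable_dev.
  by move=> s /=; rewrite !in_itv/= => sx []; exact: lt_le_trans sx xy.
move=> s _ /=; rewrite in_itv/= => /negP; rewrite -leNgt => xs.
by rewrite /dev mulr_ge0// subr_ge0 (le_trans cx).
Qed.

Lemma cond_mean_below_le x : 0 < prob_lt f x -> cond_mean_below f x <= x.
Proof.
move=> Px; rewrite -subr_le0 -(pmulr_rle0 _ Px) -excess_cond_mean//.
apply: Rintegral_le0 => s /=; rewrite in_itv/= => sx.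
by rewrite /dev mulr_le0_ge0// subr_le0 ltW.
Qed.

Lemma le_cond_mean_below x y : 0 < prob_lt f x -> x <= y ->
  cond_mean_below f x <= cond_mean_below f y.
Proof.
move=> Px xy; have Py := lt_le_trans Px (le_prob_lt xy).
rewrite -subr_ge0 -(pmulr_rge0 _ Py) -excess_cond_mean//.
have := le_excess (cond_mean_below_le Px) xy.
by rewrite excess_cond_mean// subrr mulr0.
Qed.

Lemma lt_cond_mean_below x y : 0 < prob_lt f x -> 0 <= x -> x < y ->
  cond_mean_below f x < cond_mean_below f y.
Proof.
move=> Px x0 xy; have Py := lt_le_trans Px (le_prob_lt (ltW xy)).
rewrite -subr_gt0 -(pmulr_rgt0 _ Py) -excess_cond_mean//.
set c := cond_mean_below f x; have cx : c <= x by exact: cond_mean_below_le.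
pose u := (x + y) / 2; have xu : x < u by rewrite /u; lra.
have uy : u < y by rewrite /u; lra.
rewrite /excess (Rintegral_itvNy_split (integrable_dev c) (ltW uy)).
apply: ltr_wpDl.
  have := le_excess cx (ltW xu); rewrite /excess -/(excess c x).
  by rewrite excess_cond_mean// subrr mulr0.
apply: (@lt_le_trans _ _ (\int[mu]_(s in `[u, y[) ((u - x) * f s))).
  rewrite RintegralZl//; last exact: integrableS integrable_density.
  by rewrite mulr_gt0 ?subr_gt0// prob_itv_gt0// (le_trans x0)// ltW.
apply: le_Rintegral => //; [exact: integrableS (integrable_scaled_density _)|
  exact: integrableS (integrable_dev c)|].
move=> s /=; rewrite in_itv/= => /andP[us _]; rewrite /dev ler_wpM2r//.
by rewrite lerB.
Qed.

Section betaL.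
Variables L vl : R.
Hypothesis L_ge0 : 0 <= L.
Hypothesis vl_ge0 : 0 <= vl.
Hypothesis prob_vl_gt0 : 0 < prob_lt f vl.
Hypothesis L_cond_mean : L = cond_mean_below f vl.
Notation beta := (betaL f L vl).

Lemma prob_lt_gt0 t : vl <= t -> 0 < prob_lt f t.
Proof. by move=> vlt; exact: lt_le_trans prob_vl_gt0 (le_prob_lt vlt). Qed.

Lemma betaL_ge t : vl <= t -> beta t = cond_mean_below f t.
Proof. by rewrite /betaL => ->. Qed.

Lemma L_le_cond_mean_below t : vl <= t -> L <= cond_mean_below f t.
Proof. by move=> vlt; rewrite L_cond_mean le_cond_mean_below. Qed.

Lemma betaL_le_L t : t <= vl -> beta t <= L.
Proof.
rewrite le_eqVlt => /predU1P[->|tvl]; first by rewrite betaL_ge// L_cond_mean.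
by rewrite /betaL (leNgt vl t) tvl /=; case: ifP.
Qed.

Lemma betaL_nondecreasing : {homo beta : s t / s <= t}.
Proof.
move=> s t st; have [vls|svl] := leP vl s.
  by rewrite !betaL_ge ?(le_trans vls)// le_cond_mean_below// prob_lt_gt0.
have [vlt|tvl] := leP vl t.
  by rewrite (betaL_ge vlt); exact: le_trans (betaL_le_L (ltW svl)) (L_le_cond_mean_below vlt).
rewrite /betaL (leNgt vl s) svl (leNgt vl t) tvl /=.
have [Ls|_] := ltP L s; first by rewrite (lt_le_trans Ls st).
by case: ifP.
Qed.

Lemma betaL_le v : 0 <= v -> beta v <= v.
Proof.
move=> v0; have [vlv|vvl] := leP vl v.
  by rewrite betaL_ge// cond_mean_below_le// prob_lt_gt0.
by rewrite /betaL (leNgt vl v) vvl /=; case: ifP => // /ltW.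
Qed.

Lemma lt_betaL v v' : vl < v' -> (beta v < beta v') = (v < v').
Proof.
move=> vlv'; have [vv'|v'v] := ltP v v'; last first.
  by apply/negbTE; rewrite -leNgt betaL_nondecreasing.
rewrite (betaL_ge (ltW vlv')); have [vlv|vvl] := leP vl v.
  by rewrite betaL_ge// lt_cond_mean_below// ?prob_lt_gt0// (le_trans vl_ge0).
apply: le_lt_trans (betaL_le_L (ltW vvl)) _.
by rewrite L_cond_mean lt_cond_mean_below.
Qed.

Lemma Rintegral_dev_betaL_le0 S c : down_closed S -> S vl ->
  (forall t, S t -> beta t <= c) -> \int[mu]_(s in S) dev c s <= 0.
Proof.
move=> dS Svl Sc; apply: (Rintegral_down_closed_le0 (integrable_dev c) dS Svl).
move=> t St vlt; rewrite -/(excess c t) excess_cond_mean ?prob_lt_gt0//.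
by rewrite pmulr_rle0 ?prob_lt_gt0// subr_le0 -betaL_ge// Sc.
Qed.

Lemma exp_payoffA_le0 a : (exp_payoffA f L beta a <= 0)%E.
Proof.
rewrite /exp_payoffA /payoffA; have [La|aL] := ltP L a; last first.
  by rewrite integral0_eq// => v _; rewrite andbF mul0r.
under eq_integral do rewrite andbT (fun_if (fun y => y * f _)) mul0r.
have dS : down_closed [set v | beta v < a].
  by move=> s t st /=; apply: le_lt_trans (betaL_nondecreasing st).
rewrite integral_ifE ?lee_fin; [|exact: down_closed_measurable|exact: integrable_dev].
apply: Rintegral_dev_betaL_le0 => //= [|t /ltW//].
by rewrite (le_lt_trans (betaL_le_L (lexx vl))).
Qed.

Lemma exp_payoffA_betaL v' : exp_payoffA f L beta (beta v') = 0%E.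
Proof.
rewrite /exp_payoffA /payoffA; have [La|aL] := ltP L (beta v'); last first.
  by rewrite integral0_eq// => v _; rewrite andbF mul0r.
have vlv' : vl < v' by rewrite ltNge; apply: contraTN La => /betaL_le_L; rewrite -leNgt.
under eq_integral do rewrite andbT lt_betaL// (fun_if (fun y => y * f _)) mul0r.
rewrite integral_ifE; [|by rewrite -set_itvNyo|exact: integrable_dev].
rewrite -set_itvNyo -/(excess _ v') excess_cond_mean ?prob_lt_gt0 ?(ltW vlv')//.
by rewrite -betaL_ge ?(ltW vlv')// subrr mulr0.
Qed.

Lemma exp_payoffA_mixed_betaL : exp_payoffA_mixed f L beta beta = 0%E.
Proof.
by rewrite /exp_payoffA_mixed integral0_eq// => v' _; rewrite exp_payoffA_betaL mule0.
Qed.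

Lemma down_closed_betaL_le b : down_closed [set t | beta t <= b].
Proof. by move=> s t st /=; apply: le_trans (betaL_nondecreasing st). Qed.

Lemma exp_payoffBE v b : L <= b ->
  exp_payoffB f L beta v b = (\int[mu]_(t in [set t | beta t <= b]) ((v - b) * f t))%:E.
Proof.
move=> Lb; rewrite /exp_payoffB /payoffB Lb.
under eq_integral do rewrite andbT (fun_if (fun y => y * f _)) mul0r.
rewrite integral_ifE//; last exact: integrable_scaled_density.
by apply: down_closed_measurable; exact: down_closed_betaL_le.
Qed.

Lemma exp_payoffB_lt v b : b < L -> exp_payoffB f L beta v b = 0%E.
Proof.
move=> bL; rewrite /exp_payoffB integral0_eq// => t _.
by rewrite /payoffB (leNgt L b) bL andbF mul0r.
Qed.

Lemma exp_payoffB_ge0 v b : b <= v -> (0 <= exp_payoffB f L beta v b)%E.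
Proof.
move=> bv; apply: integral_ge0 => t _; rewrite lee_fin /payoffB.
by case: ifP => _; rewrite ?mul0r// mulr_ge0// subr_ge0.
Qed.

Lemma exp_payoffB_le0 v b : L <= b -> v <= b -> (exp_payoffB f L beta v b <= 0)%E.
Proof.
move=> Lb vb; rewrite exp_payoffBE// lee_fin; apply: Rintegral_le0 => t _.
by rewrite mulr_le0_ge0// subr_le0.
Qed.

Lemma exp_payoffB_le_excess v b : L <= b ->
  (exp_payoffB f L beta v b <= (- excess v (Num.max v vl))%:E)%E.
Proof.
move=> Lb; rewrite exp_payoffBE// lee_fin.
set T := [set t | beta t <= b]; set w := Num.max v vl.
have mT : measurable T by apply: down_closed_measurable; exact: down_closed_betaL_le.
have -> : \int[mu]_(t in T) ((v - b) * f t) =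
    \int[mu]_(t in T) dev b t - \int[mu]_(t in T) dev v t.
  rewrite -RintegralB//; [|exact: integrableS (integrable_dev b)|
                           exact: integrableS (integrable_dev v)].
  by apply: eq_Rintegral => t _; rewrite /dev; ring.
have le0 : \int[mu]_(t in T) dev b t <= 0.
  apply: Rintegral_dev_betaL_le0 => //; first exact: down_closed_betaL_le.
  exact: le_trans (betaL_le_L (lexx vl)) Lb.
suff : excess v w <= \int[mu]_(t in T) dev v t by lra.
apply: le_Rintegral_set => //; first exact: integrable_dev.
  move=> t /=; rewrite in_itv/= => tw /negP; rewrite -ltNge => bt.
  have vlt : vl < t.
    by rewrite ltNge; apply: contraTN bt => /betaL_le_L/le_trans/(_ Lb); rewrite -leNgt.
  have tv : t < v by move: tw; rewrite /w lt_max (ltNge t vl) (ltW vlt) orbF.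
  by rewrite /dev mulr_le0_ge0// subr_le0 ltW.
move=> t _ /=; rewrite in_itv/= => /negP; rewrite -leNgt /w ge_max => /andP[vt _].
by rewrite /dev mulr_ge0// subr_ge0.
Qed.

Lemma betaL_cond_mean_max v : vl <= v \/ L < v ->
  beta v = cond_mean_below f (Num.max v vl).
Proof.
have [vlv _|vvl] := leP vl v; first by rewrite betaL_ge// max_l.
case=> // Lv.
by rewrite /betaL (leNgt vl v) vvl /= Lv.
Qed.

Lemma exp_payoffB_betaL_ge v : vl <= v \/ L < v ->
  ((- excess v (Num.max v vl))%:E <= exp_payoffB f L beta v (beta v))%E.
Proof.
move=> hv; set w := Num.max v vl.
have vlw : vl <= w by rewrite le_max lexx orbT.
have bv := betaL_cond_mean_max hv; rewrite -/w in bv.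
have Lbv : L <= beta v by rewrite bv L_le_cond_mean_below.
have v0 : 0 <= v by case: hv => [/(le_trans vl_ge0)|/ltW/(le_trans L_ge0)].
rewrite exp_payoffBE// lee_fin excess_cond_mean ?prob_lt_gt0// -bv.
rewrite mulrC -opprB mulNr opprK -RintegralZl//; last first.
  exact: integrableS integrable_density.
apply: le_Rintegral_set => //.
- by apply: down_closed_measurable; exact: down_closed_betaL_le.
- exact: integrable_scaled_density.
- move=> t /=; rewrite in_itv/= => tw []; have [tv|vt] := leP t v.
    exact: betaL_nondecreasing.
  move: tw; rewrite /w lt_max (ltNge t v) (ltW vt) /= => tvl.
  have [vlv|Lv] := hv; first by move: (lt_le_trans tvl vlv); rewrite ltNge (ltW vt).
  by rewrite (le_trans (betaL_le_L (ltW tvl))).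
- by move=> t _ _; rewrite mulr_ge0// subr_ge0 betaL_le.
Qed.

Lemma betaL_best_response v b : 0 <= v ->
  (exp_payoffB f L beta v b <= exp_payoffB f L beta v (beta v))%E.
Proof.
move=> v0; have own_ge0 := exp_payoffB_ge0 (betaL_le v0).
have [bL|Lb] := ltP b L; first by rewrite exp_payoffB_lt.
have [/andP[vL _]|hv] := boolP ((v <= L) && (v < vl)).
  exact: le_trans (exp_payoffB_le0 Lb (le_trans vL Lb)) own_ge0.
apply: le_trans (exp_payoffB_le_excess v Lb) (exp_payoffB_betaL_ge _).
by move: hv; rewrite negb_and -ltNge -leNgt => /orP[]; [right|left].
Qed.

End betaL.

End density.

Theorem theorem1 (R : realType) (f : R -> R) (L : R) :
  density_on_Rplus f ->
  0 <= L ->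
  L < mean f ->
  forall vl : R, 0 <= vl -> 0 < prob_lt f vl -> L = cond_mean_below f vl ->
  (* Alice: her mixed strategy (bid betaL(v'), v' ~ F_v) is a best response:
     no bid a >= 0 yields more against Bob's strategy betaL *)
  (forall a : R, 0 <= a ->
     (exp_payoffA f L (betaL f L vl) a
      <= exp_payoffA_mixed f L (betaL f L vl) (betaL f L vl))%E)
  /\
  (* Bob: at every value v >= 0, bidding betaL(v) is optimal against Alice's
     mixed strategy *)
  (forall v : R, 0 <= v -> forall b : R, 0 <= b ->
     (exp_payoffB f L (betaL f L vl) v b
      <= exp_payoffB f L (betaL f L vl) v (betaL f L vl v))%E).
Proof.
move=> [mf [f_ge0 [_ [f_int1 [xf_int f_supp]]]]] L_ge0 _ vl vl_ge0 vl_prob L_vl.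
split=> [a _|v v0 b _]; last exact: betaL_best_response.
by rewrite exp_payoffA_mixed_betaL//; exact: exp_payoffA_le0.
Qed.
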